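(* Let $5\leq p_1<\cdots<p_m$ be $m$ distinct primes. Then the set of integers $x$ such that for each $i=1,\ldots,m$ there is an odd integer $k_i$ with $x=k_ip_i+4N(p_i/6)$ or $x=k_ip_i-4N(p_i/6)$ (the $m$-fold non-ranks of $p_1,\ldots,p_m$) is the union of exactly $2^m$ pairwise distinct arithmetic progressions (residue classes) with common difference $2p_1\cdots p_m$.
   Context: $N(x)$ denotes the integer nearest to the real number $x$. *)

From mathcomp Require Import all_boot all_order all_algebra.
Set Implicit Arguments. Unset Strict Implicit. Unset Printing Implicit Defensive.
Import Order.TTheory GRing.Theory Num.Theory.
Local Open Scope ring_scope.

(* N(x): the integer nearest to the rational x (ties rounded up;
   ties never occur in the statement since p/6 is never a half-integer
   for a prime p >= 5). *)
Definition nearest_int (x : rat) : int := Num.floor (x + 1 / 2).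

Definition nonrank (p : nat) (x : int) : Prop :=
  exists k : int, ~~ (2 %| k)%Z /\
    (x = k * p%:Z + 4 * nearest_int (p%:Q / 6%:Q)
     \/ x = k * p%:Z - 4 * nearest_int (p%:Q / 6%:Q)).

Definition mfold_nonrank (ps : seq nat) (x : int) : Prop :=
  forall p, p \in ps -> nonrank p x.

From mathcomp Require Import all_boot all_order all_algebra.
From mathcomp Require Import zify ring lra.
Set Implicit Arguments.
Unset Strict Implicit.
Unset Printing Implicit Defensive.

Import Order.TTheory GRing.Theory Num.Theory.

(* N(p/6) = floor((p + 3)/6), so for a prime p >= 5 the shift r_p = 4 N(p/6) is even
   with 0 < r_p < p.  Since p is odd, x = k p +- r_p with k odd means exactly that x is
   odd and x = +-r_p (mod p): a condition on x mod 2p that holds for exactly two of the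
   p residues mod p.  By the Chinese remainder theorem the m-fold non-ranks are therefore
   the residues c mod 2 p_1 ... p_m with c odd and c = +-r_(p_i) (mod p_i) for all i,
   and there are 1 * 2 * ... * 2 = 2^m of them. *)

Definition nonrank_shift (p : nat) : nat := 4 * ((p + 3) %/ 6).

Lemma nonrank_shift_bounds p : (5 <= p)%N -> (0 < nonrank_shift p < p)%N.
Proof. rewrite /nonrank_shift; lia. Qed.

Lemma prime_ge5_odd p : prime p -> (5 <= p)%N -> odd p.
Proof. by move=> /even_prime [->|]. Qed.

Definition pm_residue (p r u : nat) : bool := (u %% p == r) || (u %% p == p - r).

Lemma count_pm_residue p r : odd p -> (0 < r < p)%N ->
  count (pm_residue p r) (iota 0 p) = 2.
Proof.
move=> p_odd r_lt.
rewrite (@eq_in_count _ _ (predU (pred1 r) (pred1 (p - r)))); last first.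
  by move=> u; rewrite mem_iota => /andP[_ u_lt]; rewrite /pm_residue modn_small.
have := count_predUI (pred1 r) (pred1 (p - r)) (iota 0 p).
rewrite (@eq_count _ (predI _ _) pred0); last first.
  by move=> u /=; apply/negP => /andP[/eqP -> /eqP]; lia.
rewrite count_pred0 !count_uniq_mem ?iota_uniq // !mem_iota.
have -> : (0 <= r < 0 + p)%N by lia.
have -> : (0 <= p - r < 0 + p)%N by lia.
lia.
Qed.

Lemma count_iota0_sum (P : pred nat) n : count P (iota 0 n) = \sum_(i < n) P i.
Proof.
rewrite -sum1_count big_mkcond -(big_mkord xpredT (fun i => nat_of_bool (P i))).
by rewrite /index_iota subn0; apply: eq_bigr => i _; case: (P i).
Qed.

Lemma count_iota0_chinese (a b : nat) (A B : pred nat) :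
  0 < a -> 0 < b -> coprime a b ->
  count (fun c => A (c %% a) && B (c %% b)) (iota 0 (a * b)) =
  count A (iota 0 a) * count B (iota 0 b).
Proof.
move=> a_gt0 b_gt0 ab_coprime; rewrite !count_iota0_sum big_distrl /=.
under [RHS]eq_bigr do rewrite big_distrr /=.
rewrite pair_bigA /=.
pose g (c : 'I_(a * b)) := (Ordinal (ltn_pmod c a_gt0), Ordinal (ltn_pmod c b_gt0)).
have g_inj : injective g.
  move=> c c' [ac bc]; apply: val_inj => /=.
  have := chinese_remainder ab_coprime c c'; rewrite ac bc !eqxx => /eqP.
  by rewrite !modn_small.
rewrite (reindex g) /=; last by apply/onW_bij/inj_card_bij; rewrite // card_prod !card_ord.
by apply: eq_bigr => c _; case: (A _); case: (B _).
Qed.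

Lemma card_ord_count n (P : pred nat) : #|[set i : 'I_n | P i]| = count P (iota 0 n).
Proof.
rewrite count_iota0_sum -sum1_card big_mkcond /=.
by apply: eq_bigr => i _; rewrite inE; case: (P i).
Qed.

Definition nonrank_residue (ps : seq nat) (c : nat) : bool :=
  odd c && all (fun p => pm_residue p (nonrank_shift p) c) ps.

Lemma prod_primes_gt0 (ps : seq nat) : all prime ps -> 0 < \prod_(p <- ps) p.
Proof.
move=> /allP ps_prime; rewrite big_seq_cond prodn_cond_gt0 // => p /andP[p_in _].
exact/prime_gt0/ps_prime.
Qed.

Lemma count_nonrank_residue (ps : seq nat) :
  sorted ltn ps -> all prime ps -> all (fun p => 5 <= p) ps ->
  count (nonrank_residue ps) (iota 0 (2 * \prod_(p <- ps) p)) = 2 ^ size ps.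
Proof.
elim: ps => [|p ps IH] /=; first by rewrite big_nil.
move=> ps_sorted /andP[p_prime ps_prime] /andP[p_ge5 ps_ge5].
set P := \prod_(q <- ps) q.
have P_gt0 : 0 < P by exact: prod_primes_gt0.
have p_coprime : coprime p (2 * P).
  rewrite coprimeMr !prime_coprime //; apply/andP; split.
    by apply/negP => /(dvdn_leq (isT : 0 < 2)); lia.
  rewrite /P Euclid_dvd_prod // big_has; apply/hasP => -[q q_in].
  rewrite dvdn_prime2 //; last exact: (allP ps_prime).
  move/eqP=> pq; have := allP (order_path_min ltn_trans ps_sorted) q q_in.
  by rewrite -pq ltnn.
rewrite big_cons -/P mulnCA.
rewrite (@eq_count _ _ (fun c => pm_residue p (nonrank_shift p) (c %% p) &&
                                  nonrank_residue ps (c %% (2 * P)))); last first.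
  move=> c /=; rewrite /nonrank_residue /= /pm_residue modn_mod.
  rewrite odd_mod ?oddM // andbCA; congr (_ && (_ && _)).
  apply: eq_in_all => q q_in /=.
  by rewrite /pm_residue (@modn_dvdm (2 * P)) // dvdn_mull // /P (big_rem q) //= dvdn_mulr.
rewrite count_iota0_chinese ?muln_gt0 ?P_gt0 ?prime_gt0 //.
rewrite IH ?(path_sorted ps_sorted) // expnS.
by rewrite count_pm_residue ?prime_ge5_odd ?nonrank_shift_bounds.
Qed.

Local Open Scope ring_scope.

Lemma nearest_int_sixth (p : nat) : nearest_int (p%:Q / 6%:Q) = ((p + 3) %/ 6)%N%:Z.
Proof.
rewrite /nearest_int; apply: floor_def; set m := ((p + 3) %/ 6)%N.
have /andP[lo hi] : (6 * m <= p + 3 < 6 * m + 6)%N by rewrite /m; lia.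
rewrite -(ler_nat rat) in lo; rewrite -(ltr_nat rat) in hi.
rewrite ?(natrD, natrM) in lo hi; rewrite intrD /=.
apply/andP; split; lra.
Qed.

Lemma odd_multiple_pm_shiftP (p r : nat) (x : int) :
  odd p -> ~~ odd r -> (0 < r < p)%N ->
  (exists k : int, ~~ (2 %| k)%Z /\ (x = k * p%:Z + r%:Z \/ x = k * p%:Z - r%:Z)) <->
  (x %% 2 = 1)%Z /\ ((x %% p)%Z = r%:Z \/ (x %% p)%Z = p%:Z - r%:Z).
Proof.
move=> p_odd r_even r_lt.
split=> [[k [k_odd [->|->]]] | [x_odd [xp|xp]]].
- split; first nia.
  by left; rewrite modzMDl modz_small //; lia.
- split; first nia.
  right; rewrite (_ : k * p%:Z - r%:Z = (k - 1) * p%:Z + (p%:Z - r%:Z)); last by ring.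
  by rewrite modzMDl modz_small //; lia.
- have := divz_eq x p; rewrite xp => ex.
  by exists (x %/ p)%Z; split; [nia | left].
- have := divz_eq x p; rewrite xp => ex.
  by exists ((x %/ p)%Z + 1); split; [nia | right; lia].
Qed.

Lemma nonrankP p x : prime p -> (5 <= p)%N ->
  nonrank p x <-> (x %% 2 = 1)%Z /\
    ((x %% p)%Z = (nonrank_shift p)%:Z \/ (x %% p)%Z = p%:Z - (nonrank_shift p)%:Z).
Proof.
move=> p_prime p_ge5; rewrite -odd_multiple_pm_shiftP.
- by rewrite /nonrank nearest_int_sixth PoszM.
- exact: prime_ge5_odd.
- by rewrite /nonrank_shift oddM.
- exact: nonrank_shift_bounds.
Qed.

Lemma modz_dvdm (x d M : int) : (d %| M)%Z -> ((x %% M)%Z %% d)%Z = (x %% d)%Z.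
Proof. by move=> /dvdzP[k ->]; rewrite [in RHS](divz_eq x (k * d)) mulrA modzMDl. Qed.

Lemma nonrank_mod p (M c : nat) x : prime p -> (5 <= p)%N ->
  (2 %| M)%N -> (p %| M)%N -> (x %% M)%Z = c%:Z ->
  nonrank p x <-> odd c && pm_residue p (nonrank_shift p) c.
Proof.
move=> p_prime p_ge5 M2 Mp xM; have r_bounds := nonrank_shift_bounds p_ge5.
have x2 : (x %% 2)%Z = (odd c)%:Z.
  by rewrite -(@modz_dvdm _ _ M) -?dvdzE // xM modz_nat modn2.
have xp : (x %% p)%Z = (c %% p)%N%:Z.
  by rewrite -(@modz_dvdm _ _ M) -?dvdzE // xM modz_nat.
rewrite nonrankP // x2 xp subzn; last by lia.
rewrite /pm_residue; split=> [[c_odd cp] | /andP[-> /orP[] /eqP ->]].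
- by case: (odd c) c_odd; case: cp => -[->]; rewrite eqxx ?orbT.
- by split; [|left].
- by split; [|right].
Qed.

Lemma mfold_nonrank_mod (ps : seq nat) (M c : nat) x :
  (0 < size ps)%N -> all prime ps -> all (fun p => 5 <= p)%N ps ->
  (2 * \prod_(p <- ps) p %| M)%N -> (x %% M)%Z = c%:Z ->
  mfold_nonrank ps x <-> nonrank_residue ps c.
Proof.
move=> ps_size /allP ps_prime /allP ps_ge5 prod_dvd xM.
have nonrank_c p : p \in ps -> nonrank p x <-> odd c && pm_residue p (nonrank_shift p) c.
  move=> p_in; apply: nonrank_mod xM; rewrite ?ps_prime ?ps_ge5 //.
    exact: dvdn_trans (dvdn_mulr _ _) prod_dvd.
  apply: dvdn_trans prod_dvd.
  by rewrite dvdn_mull // (big_rem p) //= dvdn_mulr.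
split=> [ps_nonrank | /andP[c_odd /allP c_res] p p_in].
- apply/andP; split.
    have p0_in := mem_nth 0%N ps_size.
    by have /(nonrank_c _ p0_in)/andP[] := ps_nonrank _ p0_in.
  by apply/allP=> q q_in; have /(nonrank_c q q_in)/andP[] := ps_nonrank q q_in.
- by apply/(nonrank_c p p_in); rewrite c_odd c_res.
Qed.

Theorem theorem3p13 (ps : seq nat) :
  (0 < size ps)%N ->
  sorted ltn ps ->
  all prime ps ->
  all (fun p => 5 <= p)%N ps ->
  exists C : {set 'I_(2 * \prod_(p <- ps) p)%N},
    #|C| = (2 ^ size ps)%N /\
    (forall x : int,
       mfold_nonrank ps x <->
       exists2 c, c \in C & (x %% (2 * \prod_(p <- ps) p)%N%:Z)%Z = (nat_of_ord c)%:Z).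
Proof.
move=> ps_size ps_sorted ps_prime ps_ge5; set M := (2 * _)%N.
have M_gt0 : (0 < M)%N by rewrite muln_gt0 prod_primes_gt0.
exists [set c : 'I_M | nonrank_residue ps c]; split.
  by rewrite card_ord_count count_nonrank_residue.
move=> x; have [c xM] : exists c : 'I_M, (x %% M)%Z = c%:Z.
  have xM_ge0 : (0 <= x %% M)%Z by rewrite modz_ge0 // -lt0n.
  have xM_lt : (`|(x %% M)%Z| < M)%N by rewrite -ltz_nat gez0_abs // ltz_pmod.
  by exists (Ordinal xM_lt); rewrite /= gez0_abs.
rewrite (mfold_nonrank_mod _ _ _ _ xM) //.
split=> [c_res | [c' + ]]; first by exists c; rewrite ?inE.
by rewrite inE xM => c'_res [/val_inj ->].
Qed.
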